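(* For every integer $k \geq 6$, there exists a stringent graph on $k$ vertices.
   Context: All graphs are finite and simple; $N(u)$ denotes the set of neighbours of a vertex $u$. A set $W\subseteq V(H)$ is homogeneous in $H$ if $N(u)\setminus W=N(v)\setminus W$ for every two distinct vertices $u,v\in W$. A graph $H$ is stringent if it contains no homogeneous set $W$ with $1<|W|\le|V(H)|-1$ and has no non-trivial automorphisms. *)

From mathcomp Require Import all_boot all_fingroup.
Set Implicit Arguments. Unset Strict Implicit. Unset Printing Implicit Defensive.

Definition simple_graph (T : finType) (e : rel T) : Prop :=
  symmetric e /\ irreflexive e.

Definition nbhd (T : finType) (e : rel T) (u : T) : {set T} := [set v | e u v].

Definition homogeneous (T : finType) (e : rel T) (W : {set T}) : Prop :=
  forall u v, u \in W -> v \in W -> u != v -> nbhd e u :\: W = nbhd e v :\: W.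

Definition is_automorphism (T : finType) (e : rel T) (s : {perm T}) : Prop :=
  forall u v, e (s u) (s v) = e u v.

Definition stringent (T : finType) (e : rel T) : Prop :=
  (forall W : {set T}, 1 < #|W| -> #|W| <= #|T| - 1 -> ~ homogeneous e W) /\
  (forall s : {perm T}, is_automorphism e s -> s = 1%g).

From mathcomp Require Import all_boot all_fingroup.
From mathcomp Require Import zify.

Set Implicit Arguments. Unset Strict Implicit. Unset Printing Implicit Defensive.

(* The witness is the path 0 - 1 - ... - (k-1) with the extra chord 1 - 3.
   A homogeneous set containing two vertices must contain every vertex that
   separates them, and along a path such a set keeps growing until it is
   everything; the chord only blocks growing {1, 2} upwards and {2, 3}
   downwards, and both are bypassed by using another pair.  An automorphism maps the
   unique triangle 1 2 3 onto itself, hence permutes its exits 0 and 4; it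
   cannot swap them since 4 has a further neighbour and 0 does not, and once
   two consecutive tail vertices are fixed the next one is forced. *)

Definition chord_path (x y : nat) : bool :=
  (x.+1 == y) || (y.+1 == x) || ((x == 1) && (y == 3)) || ((x == 3) && (y == 1)).

Definition chord_path_graph (k : nat) : rel 'I_k := fun x y => chord_path x y.
Arguments chord_path_graph : clear implicits.

Lemma chord_path_sym : symmetric chord_path.
Proof. by move=> x y; rewrite /chord_path; lia. Qed.

Lemma chord_path_irrefl : irreflexive chord_path.
Proof. by move=> x; rewrite /chord_path; lia. Qed.

Lemma chord_path_triangle a b c :
  chord_path a b -> chord_path b c -> chord_path a c ->
  [/\ 0 < a < 4, 0 < b < 4 & 0 < c < 4].
Proof. by rewrite /chord_path; split; lia. Qed.

Lemma chord_path_exit_triangle a b :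
  0 < a < 4 -> ~~ (0 < b < 4) -> chord_path a b ->
  a = 1 /\ b = 0 \/ a = 3 /\ b = 4.
Proof. by rewrite /chord_path; lia. Qed.

Lemma chord_path_nbhd_tail j b : 4 <= j -> chord_path j b -> b = j.-1 \/ b = j.+1.
Proof. by rewrite /chord_path; lia. Qed.

Lemma homogeneous_sep_mem (T : finType) (e : rel T) (W : {set T}) x y w :
  homogeneous e W -> x \in W -> y \in W -> e x w != e y w -> w \in W.
Proof.
move=> hW xW yW; apply: contraR => wW.
case: (eqVneq x y) => [-> //|xy].
by have /setP/(_ w) := hW x y xW yW xy; rewrite !inE wW /= => ->.
Qed.

Section Spread.

Variables (k : nat) (P : nat -> bool).
Hypothesis k_ge6 : 6 <= k.
Hypothesis P_sep : forall x y w, x < k -> y < k -> w < k ->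
  P x -> P y -> chord_path x w != chord_path y w -> P w.

Lemma spread_up_step x y : x < y -> y.+1 < k -> ~~ ((x == 1) && (y == 2)) ->
  P x -> P y -> P y.+1.
Proof. by move=> *; apply: (@P_sep x y); rewrite ?/chord_path; lia. Qed.

Lemma spread_down_step x y : 0 < x -> x < y -> y < k -> ~~ ((x == 2) && (y == 3)) ->
  P x -> P y -> P x.-1.
Proof. by move=> *; apply: (@P_sep x y); rewrite ?/chord_path; lia. Qed.

Lemma spread_up x y : x < y -> ~~ ((x == 1) && (y == 2)) -> P x -> P y ->
  forall z, y <= z < k -> P z.
Proof.
move=> xy not12 Px Py z /andP[yz].
have [d -> {z yz}] : exists d, z = y + d by exists (z - y); lia.
elim: d => [|d IH] zk; first by rewrite addn0.
by rewrite addnS; apply: (@spread_up_step x) => //; try apply: IH; lia.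
Qed.

Lemma spread_down x y : x < y -> 4 <= y -> y < k -> P x -> P y ->
  forall z, z <= x -> P z.
Proof.
move=> xy y4 yk Px Py z zx.
have [d -> {z zx}] : exists d, z = x - d by exists (x - z); lia.
elim: d => [|d IH]; first by rewrite subn0.
case: (ltnP d x) => dx; last by have -> : x - d.+1 = x - d by lia.
by rewrite subnS; apply: (spread_down_step (y := y)); rewrite ?IH //; lia.
Qed.

Lemma spread_from_01 : P 0 -> P 1 -> forall z, z < k -> P z.
Proof.
move=> P0 P1 [//|z] zk.
by apply: (spread_up (x := 0) (y := 1)) => //; lia.
Qed.

Lemma spread_from_tail x y : x < y -> 4 <= y -> y < k -> P x -> P y ->
  forall z, z < k -> P z.
Proof.
move=> xy y4 yk Px Py.
have P0 : P 0 by apply: (spread_down xy).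
apply: spread_from_01 => //.
case: (posnP x) => [x0|x_gt0]; last by apply: (spread_down xy).
by apply: (@P_sep 0 y); rewrite -?x0 ?/chord_path //; lia.
Qed.

Lemma spread_from_pair x y : x < y -> y < k -> P x -> P y -> forall z, z < k -> P z.
Proof.
have spread_from_not12 u v : u < v -> v < k -> ~~ ((u == 1) && (v == 2)) ->
    P u -> P v -> forall z, z < k -> P z.
  move=> uv vk not12 Pu Pv.
  case: (leqP 4 v) => v4; first exact: (spread_from_tail uv).
  have P4 : P 4 by apply: (spread_up uv not12 Pu Pv); lia.
  by apply: (spread_from_tail (x := u) (y := 4)) => //; lia.
move=> xy yk Px Py.
case: (boolP ((x == 1) && (y == 2))) => [/andP[/eqP x1 /eqP y2]|]; last first.
  by move=> not12; apply: (spread_from_not12 x y).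
subst x y; have P0 : P 0 := spread_down_step (x := 1) isT xy yk isT Px Py.
exact: (spread_from_not12 0 2).
Qed.

End Spread.

Lemma chord_path_graph_homogeneous_full k (W : {set 'I_k}) :
  6 <= k -> homogeneous (chord_path_graph k) W -> 1 < #|W| -> W = [set: 'I_k].
Proof.
move=> k_ge6 hW /card_gt1P[x [y [xW yW xy]]].
pose P m := [exists o in W, val o == m].
have memP o : o \in W -> P o by move=> oW; apply/existsP; exists o; rewrite oW /=.
have P_sep a b w : a < k -> b < k -> w < k -> P a -> P b ->
    chord_path a w != chord_path b w -> P w.
  move=> _ _ wk /existsP[oa /andP[oaW /eqP <-]] /existsP[ob /andP[obW /eqP <-]] sep.
  exact: (memP (Ordinal wk) (homogeneous_sep_mem (w := Ordinal wk) hW oaW obW sep)).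
have allP : forall m, m < k -> P m.
  case: (ltngtP x y) => [lt_xy|lt_yx|/val_inj eq_xy]; last by rewrite eq_xy eqxx in xy.
  - exact: (spread_from_pair k_ge6 P_sep lt_xy (ltn_ord y) (memP x xW) (memP y yW)).
  - exact: (spread_from_pair k_ge6 P_sep lt_yx (ltn_ord x) (memP y yW) (memP x xW)).
apply/setP => o; rewrite inE.
by have /existsP[o' /andP[o'W /eqP/val_inj <-]] := allP o (ltn_ord o).
Qed.

Section InjectiveHomomorphism.

Variables (k : nat) (f : nat -> nat).
Hypothesis k_ge6 : 6 <= k.
Hypothesis f_hom : forall a b, a < k -> b < k -> chord_path a b -> chord_path (f a) (f b).
Hypothesis f_inj : {in gtn k &, injective f}.

Lemma chord_path_hom_fixes_prefix : [/\ f 0 = 0, f 1 = 1, f 2 = 2, f 3 = 3 & f 4 = 4].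
Proof.
have [t1 t2 t3] : [/\ 0 < f 1 < 4, 0 < f 2 < 4 & 0 < f 3 < 4].
  by apply: chord_path_triangle; apply: f_hom => //; lia.
have ne a b : a < 6 -> b < 6 -> a != b -> f a != f b.
  by move=> ha hb; rewrite (inj_in_eq f_inj) // inE; lia.
have out0 : ~~ (0 < f 0 < 4).
  by move: (ne 0 1 isT isT isT) (ne 0 2 isT isT isT) (ne 0 3 isT isT isT)
    (ne 1 2 isT isT isT) (ne 1 3 isT isT isT) (ne 2 3 isT isT isT); lia.
have out4 : ~~ (0 < f 4 < 4).
  by move: (ne 4 1 isT isT isT) (ne 4 2 isT isT isT) (ne 4 3 isT isT isT)
    (ne 1 2 isT isT isT) (ne 1 3 isT isT isT) (ne 2 3 isT isT isT); lia.
have adj a b : a < 6 -> b < 6 -> chord_path a b -> chord_path (f a) (f b).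
  by move=> ha hb; apply: f_hom; lia.
have e10 := chord_path_exit_triangle t1 out0 (adj 1 0 isT isT isT).
have e34 := chord_path_exit_triangle t3 out4 (adj 3 4 isT isT isT).
move: t2 e10 e34 (adj 4 5 isT isT isT) (ne 0 4 isT isT isT) (ne 3 5 isT isT isT)
  (ne 1 2 isT isT isT) (ne 2 3 isT isT isT).
by clear; rewrite /chord_path; split; lia.
Qed.

Lemma chord_path_hom_fixes_succ j : 4 <= j -> j.+1 < k -> f j.-1 = j.-1 -> f j = j -> f j.+1 = j.+1.
Proof.
move=> j4 jk fj' fj.
have := f_hom (_ : j < k) (_ : j.+1 < k) (_ : chord_path j j.+1).
rewrite fj => /(_ ltac:(lia) jk ltac:(by rewrite /chord_path eqxx)).
case/(chord_path_nbhd_tail j4) => // eq_pred.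
by have := inj_in_eq f_inj (_ : j.-1 < k) jk; rewrite fj' eq_pred eqxx; lia.
Qed.

Lemma chord_path_hom_fixes_all m : m < k -> f m = m.
Proof.
have [f0 f1 f2 f3 f4] := chord_path_hom_fixes_prefix.
have fixes_pair n : 4 + n < k -> f (3 + n) = 3 + n /\ f (4 + n) = 4 + n.
  elim: n => [|n IH] hn; first by [].
  have [fa fb] := IH ltac:(lia).
  split; first by rewrite addnS.
  by rewrite !addnS; apply: chord_path_hom_fixes_succ; [lia | lia | exact: fa | exact: fb].
move=> mk; case: (ltnP m 5) => m5; first by case: m m5 {mk} => [|[|[|[|[|]]]]].
by have [_] := fixes_pair (m - 4) ltac:(lia); rewrite subnKC; lia.
Qed.

End InjectiveHomomorphism.

Lemma chord_path_graph_aut_trivial k (s : {perm 'I_k}) :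
  6 <= k -> is_automorphism (chord_path_graph k) s -> s = 1%g.
Proof.
case: k s => // n s n_ge5 s_aut.
pose f m := val (s (inord m)).
have f_hom a b : a < n.+1 -> b < n.+1 -> chord_path a b -> chord_path (f a) (f b).
  by move=> ha hb; have := s_aut (inord a) (inord b); rewrite /chord_path_graph !inordK // => ->.
have f_inj : {in gtn n.+1 &, injective f}.
  by move=> a b ha hb /val_inj/perm_inj/(congr1 (@nat_of_ord _)); rewrite !inordK.
apply/permP => o; rewrite perm1; apply/val_inj.
by have := chord_path_hom_fixes_all n_ge5 f_hom f_inj (ltn_ord o); rewrite /f inord_val.
Qed.

Theorem lemma4p2 (k : nat) (hk : 6 <= k) :
  exists e : rel 'I_k, simple_graph e /\ stringent e.
Proof.
exists (chord_path_graph k); split.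
  by split=> [x y|x]; [exact: chord_path_sym | exact: chord_path_irrefl].
split=> [W W_gt1 W_small W_hom | s]; last exact: chord_path_graph_aut_trivial.
move: W_small; rewrite (chord_path_graph_homogeneous_full hk W_hom W_gt1).
by rewrite cardsT card_ord; lia.
Qed.
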